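(* Let $A$ be a C$^*$-algebra with cancellation. (1) If $p_1,q,p_2$ are projections in $A$ with $p_1\leq p_2$ and $p_1\lesssim q\lesssim p_2$, then there exists a projection $q'\in A$ with $q'\sim_{\mathrm{MvN}}q$ and $p_1\leq q'\leq p_2$. (2) Let $\{p_n\}_{n=1}^N$ and $\{q_m\}_{m=1}^M$ be increasing sequences of projections in $A$. If there exist integers $1\leq m_1<\cdots<m_N=M$ with $p_n\sim_{\mathrm{MvN}}q_{m_n}$ for all $1\leq n\leq N$, then there exists an increasing sequence $\{r_m\}_{m=1}^M$ of projections in $A$ such that $r_m\sim_{\mathrm{MvN}}q_m$ for all $1\leq m\leq M$ and $r_{m_n}=p_n$ for all $1\leq n\leq N$.
   Context: For projections $p,q$ in a C$^*$-algebra $A$: $p\leq q$ means $pq=qp=p$; $p\sim_{\mathrm{MvN}}q$ denotes Murray--von Neumann equivalence; $p\lesssim q$ means that there is a projection $p'\in A$ with $p'\sim_{\mathrm{MvN}}p$ and $p'\leq q$. A sequence of projections is increasing if it is increasing for $\leq$. $A$ has cancellation if for all projections $p,q$ in $\bigcup_{n\geq1}M_n(A)$, $[p]_0=[q]_0$ in $K_0(A)$ if and only if $p\sim_{\mathrm{MvN}}q$. *)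

(* C*-algebras are encoded through their unitization. *)
From HB Require Import structures.
From mathcomp Require Import all_boot all_order all_algebra.
From mathcomp Require Import reals complex.
Set Implicit Arguments. Unset Strict Implicit. Unset Printing Implicit Defensive.
Import Order.TTheory GRing.Theory Num.Theory ComplexField.
Local Open Scope ring_scope.

Section CstarDefs.
Variable R : realType.
Local Notation C := R[i].
Variable B : algType C.          (* the unitization \tilde A of A *)
Variable star : B -> B.
Variable nrm : B -> R.
Variable A : B -> Prop.            (* the C*-algebra A, as an ideal of B *)

Definition nrm_converges (u : nat -> B) (l : B) : Prop :=
  forall e : R, 0 < e -> exists N : nat, forall n, (N <= n)%N -> nrm (u n - l) < e.

Definition nrm_cauchy (u : nat -> B) : Prop :=
  forall e : R, 0 < e -> exists N : nat,
    forall m n, (N <= m)%N -> (N <= n)%N -> nrm (u m - u n) < e.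

Definition is_unital_Cstar_algebra : Prop :=
      (forall x y, star (x + y) = star x + star y) /\
      (forall (a : C) x, star (a *: x) = conjc a *: star x) /\
      (forall x y, star (x * y) = star y * star x) /\
      (forall x, star (star x) = x) /\
      (forall x, nrm x = 0 <-> x = 0) /\
      (forall x y, nrm (x + y) <= nrm x + nrm y) /\
      (forall (a : C) x, nrm (a *: x) = ComplexField.Normc.normc a * nrm x) /\
      (forall x y, nrm (x * y) <= nrm x * nrm y) /\
      (forall x, nrm (star x * x) = nrm x ^+ 2) /\
      (forall u, nrm_cauchy u -> exists l, nrm_converges u l).

Definition is_unitization_of : Prop :=
  is_unital_Cstar_algebra /\
      A 0 /\
      (forall x y, A x -> A y -> A (x + y)) /\
      (forall (a : C) x, A x -> A (a *: x)) /\
      (forall x y, A x -> A (x * y) /\ A (y * x)) /\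
      (forall x, A x -> A (star x)) /\
      (forall u l, (forall n, A (u n)) -> nrm_converges u l -> A l) /\
      (forall x, exists2 a, A a & exists c : C, x = a + c%:A) /\ ~ A 1.

Definition is_proj (p : B) : Prop := A p /\ p * p = p /\ star p = p.

Definition proj_le (p q : B) : Prop := p * q = p /\ q * p = p.

Definition mvn (p q : B) : Prop :=
  exists2 v, A v & star v * v = p /\ v * star v = q.

Definition proj_lesssim (p q : B) : Prop :=
  exists p', [/\ is_proj p', mvn p' p & proj_le p' q].

Definition mx_star m n (x : 'M[B]_(m, n)) : 'M[B]_(n, m) := (map_mx star x)^T.

Definition mx_in (P : B -> Prop) m n (x : 'M[B]_(m, n)) : Prop :=
  forall i j, P (x i j).

Definition mx_proj (P : B -> Prop) n (p : 'M[B]_n) : Prop :=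
  [/\ mx_in P p, p *m p = p & mx_star p = p].

Definition mx_mvn (P : B -> Prop) n m (p : 'M[B]_n) (q : 'M[B]_m) : Prop :=
  exists v : 'M[B]_(m, n), [/\ mx_in P v, mx_star v *m v = p & v *m mx_star v = q].

Definition dsum n k (p : 'M[B]_n) (r : 'M[B]_k) : 'M[B]_(n + k) :=
  block_mx p 0 0 r.

Definition A_unital : Prop :=
  exists2 e, A e & forall x, A x -> e * x = x /\ x * e = x.

(* [p]_0 = [q]_0 in K_0(A) for p in P_n(A), q in P_m(A).
   Unital case: K_0(A) is the Grothendieck group of (D(A), (+)), so equality
   means p (+) r ~_0 q (+) r for some r in P_oo(A).
   General case: K_0(A) = ker(K_0(A~) -> K_0(C)) <= K_0(A~), so equality
   means p (+) r ~_0 q (+) r for some r in P_oo(A~). *)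
Definition K0_eq n m (p : 'M[B]_n) (q : 'M[B]_m) : Prop :=
  (A_unital ->
    exists k (r : 'M[B]_k), mx_proj A r /\ mx_mvn A (dsum p r) (dsum q r)) /\
  (~ A_unital ->
    exists k (r : 'M[B]_k), mx_proj (fun _ : B => True) r /\ mx_mvn (fun _ : B => True) (dsum p r) (dsum q r)).

Definition has_cancellation : Prop :=
  forall n m (p : 'M[B]_n) (q : 'M[B]_m), mx_proj A p -> mx_proj A q ->
    (K0_eq p q <-> mx_mvn A p q).

End CstarDefs.

(* Only the algebra of the unitization is used: a proper involution
   ([star x * x = 0 -> x = 0], from the C*-identity) and the self-adjoint ideal A.
   (1) Transport p1 ≲ q ≲ p2 to projections e <= q0 <= p2 with e ~ p1 and q0 ~ q.
   Both (p2 - e) ⊕ p1 and (p2 - p1) ⊕ p1 are equivalent to p2 ⊕ 0, so cancellation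
   gives p2 - e ~ p2 - p1; the sum of the two partial isometries is a z with
   z^* z = z z^* = p2 and z e z^* = p1, and q' := z q0 z^* works.
   (2) Build r_1 <= r_2 <= ... one index at a time: r_m := p_n when m = m_n, and
   otherwise r_m comes from (1) applied to r_(m-1) ≲ q_m ≲ p_n, with m_n the first
   breakpoint not below m. *)

From Pilot Require Import Defs.
From HB Require Import structures.
From mathcomp Require Import all_boot all_order all_algebra.
From mathcomp Require Import reals complex.
From mathcomp Require Import zify.
Set Implicit Arguments. Unset Strict Implicit. Unset Printing Implicit Defensive.
Import Order.TTheory GRing.Theory Num.Theory ComplexField.
Local Open Scope ring_scope.

Section ProperStarIdeal.
Variable R : realType.
Variable B : algType R[i].
Variables (star : B -> B) (A : B -> Prop).
Hypothesis starD : forall x y, star (x + y) = star x + star y.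
Hypothesis starM : forall x y, star (x * y) = star y * star x.
Hypothesis starK : involutive star.
Hypothesis star_mul_eq0 : forall x, star x * x = 0 -> x = 0.
Hypothesis A0 : A 0.
Hypothesis AD : forall x y, A x -> A y -> A (x + y).
Hypothesis AMl : forall x y, A x -> A (x * y).
Hypothesis AMr : forall x y, A y -> A (x * y).
Hypothesis Astar : forall x, A x -> A (star x).
Hypothesis hcanc : has_cancellation star A.

Local Notation is_proj := (is_proj star A).
Local Notation mvn := (mvn star A).
Local Notation proj_lesssim := (proj_lesssim star A).

Lemma star0 : star 0 = 0.
Proof. by apply: (addrI (star 0)); rewrite -starD !addr0. Qed.

Lemma starN x : star (- x) = - star x.
Proof. by apply: (addIr (star x)); rewrite -starD !addNr star0. Qed.

Lemma starB x y : star (x - y) = star x - star y.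
Proof. by rewrite starD starN. Qed.

Lemma mulrA_eq (x y z : B) : x * y = z -> forall t, t * x * y = t * z.
Proof. by move=> <- t; rewrite mulrA. Qed.

(* The only use of [star_mul_eq0]: [star (v * p - v) * (v * p - v) = 0]. *)
Lemma partial_isometry_mulr v p : star v * v = p -> p * p = p -> v * p = v.
Proof.
move=> vp pp; apply/eqP; rewrite -subr_eq0; apply/eqP/star_mul_eq0.
have sp : star p = p by rewrite -vp starM starK.
rewrite starB starM sp mulrBl !mulrBr !mulrA vp !(mulrA_eq vp) !pp.
by rewrite !subrr ?subr0.
Qed.

Lemma partial_isometry_mull v q : v * star v = q -> q * q = q -> q * v = v.
Proof.
move=> vq qq; have sq : star q = q by rewrite -vq starM starK.
have := @partial_isometry_mulr (star v) q; rewrite starK => /(_ vq qq).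
by move/(congr1 star); rewrite starM starK sq.
Qed.

Lemma proj0 : is_proj 0.
Proof. by split; rewrite ?mul0r ?star0. Qed.

Lemma proj_le_refl p : is_proj p -> proj_le p p.
Proof. by case=> _ []. Qed.

Lemma proj_le0 (p : B) : proj_le 0 p.
Proof. by split; rewrite ?mul0r ?mulr0. Qed.

Lemma proj_le_trans (p q r : B) : proj_le p q -> proj_le q r -> proj_le p r.
Proof.
move=> [pq qp] [qr rq]; split; first by rewrite -pq -mulrA qr.
by rewrite -qp mulrA rq.
Qed.

Lemma proj_le_chain (f : nat -> B) lo hi :
    (forall i, (lo <= i <= hi)%N -> is_proj (f i)) ->
    (forall i, (lo <= i < hi)%N -> proj_le (f i) (f i.+1)) ->
  forall i j, (lo <= i)%N -> (i <= j <= hi)%N -> proj_le (f i) (f j).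
Proof.
move=> fP fS i j loi /andP[ij jhi].
have [-> | lt_ij] := eqVneq i j; first by apply/proj_le_refl/fP; lia.
apply: (@homo_ltn_in _ [pred k | lo <= k <= hi]%N f (@proj_le _ B));
  rewrite ?inE; try lia.
- by move=> y x z; apply: proj_le_trans.
- by move=> a b a_in b_in c; rewrite !inE in a_in b_in *; lia.
- by move=> k k_in k1_in; rewrite !inE in k_in k1_in; apply: fS; lia.
Qed.

Lemma proj_sub p f : is_proj p -> is_proj f -> proj_le f p -> is_proj (p - f).
Proof.
move=> [pA [pp sp]] [fA [ff sf]] [fp pf]; split.
  by apply: AD => //; rewrite -mulN1r; apply: AMr.
split; last by rewrite starB sp sf.
by rewrite mulrBl !mulrBr pp fp pf ff subrr subr0.
Qed.

Lemma proj_subKl (p f : B) : f * f = f -> proj_le f p -> (p - f) * f = 0.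
Proof. by move=> ff [_ pf]; rewrite mulrBl pf ff subrr. Qed.

Lemma proj_subKr (p f : B) : f * f = f -> proj_le f p -> f * (p - f) = 0.
Proof. by move=> ff [fp _]; rewrite mulrBr fp ff subrr. Qed.

Lemma mvn_sym p q : mvn p q -> mvn q p.
Proof. by case=> v vA [vp vq]; exists (star v); rewrite ?starK; auto. Qed.

Lemma mvn_trans p q r : is_proj p -> is_proj r -> mvn p q -> mvn q r -> mvn p r.
Proof.
move=> [_ [pp _]] [_ [rr _]] [u uA [up uq]] [v vA [vq vr]].
exists (v * u); first exact: AMl.
rewrite !starM; split.
- by rewrite !mulrA (mulrA_eq vq) -uq !mulrA (mulrA_eq up) up pp.
- by rewrite !mulrA (mulrA_eq uq) -vq !mulrA (mulrA_eq vr) vr rr.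
Qed.

Lemma proj_le_mvn_lesssim f q q0 : is_proj f -> proj_le f q -> mvn q0 q -> proj_lesssim f q0.
Proof.
move=> [fA [ff sf]] [fq qf] [v vA [vq0 vq]].
exists (star v * f * v); split.
- split; first by apply: AMl; apply: AMr.
  split; last by rewrite !starM starK sf mulrA.
  by rewrite !mulrA (mulrA_eq vq) (mulrA_eq fq) (mulrA_eq ff).
- exists (f * v); first exact: AMl.
  by rewrite starM sf !mulrA (mulrA_eq ff) (mulrA_eq vq) fq ff.
- split; rewrite -vq0 !mulrA (mulrA_eq vq); first by rewrite (mulrA_eq fq).
  by rewrite (mulrA_eq qf).
Qed.

Lemma partial_isometryD u v p q p' q' :
    star u * u = p -> u * star u = q -> star v * v = p' -> v * star v = q' ->
    p * p = p -> q * q = q -> p' * p' = p' -> q' * q' = q' ->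
    p * p' = 0 -> q * q' = 0 ->
  star (u + v) * (u + v) = p + p' /\ (u + v) * star (u + v) = q + q'.
Proof.
move=> up uq vp vq pp qq p'p' q'q' pp' qq'.
have su_q : star u * q = star u by apply: partial_isometry_mulr; rewrite ?starK.
have sv_p' : p' * star v = star v by apply: partial_isometry_mull; rewrite ?starK.
have suv : star u * v = 0.
  by rewrite -su_q -(partial_isometry_mull vq q'q') !mulrA -(mulrA _ q) qq' mulr0 mul0r.
have usv : u * star v = 0.
  by rewrite -(partial_isometry_mulr up pp) -sv_p' !mulrA -(mulrA _ p) pp' mulr0 mul0r.
have svu : star v * u = 0 by rewrite -[u]starK -starM suv star0.
have vsu : v * star u = 0 by rewrite -[v]starK -starM usv star0.
by rewrite starD !mulrDl !mulrDr up uq vp vq suv usv svu vsu !addr0 !add0r.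
Qed.

Local Notation c1 x := (@const_mx B 1 1 x).
Local Notation mx_star := (mx_star star).
Local Notation mx_mvn := (mx_mvn star A).
Local Notation mx_proj := (mx_proj star A).

Lemma c1M x y : c1 x *m c1 y = c1 (x * y).
Proof. by apply/matrixP => i j; rewrite !mxE big_ord1 !mxE. Qed.

Lemma c1D x y : c1 x + c1 y = c1 (x + y).
Proof. by apply/matrixP => i j; rewrite !mxE. Qed.

Lemma c10 : c1 0 = 0.
Proof. by apply/matrixP => i j; rewrite !mxE. Qed.

Lemma mx_star_c1 x : mx_star (c1 x) = c1 (star x).
Proof. by apply/matrixP => i j; rewrite !mxE. Qed.

Lemma mx_starK m n (x : 'M[B]_(m, n)) : mx_star (mx_star x) = x.
Proof. by apply/matrixP => i j; rewrite !mxE starK. Qed.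

Lemma mx_starM m n k (x : 'M[B]_(m, n)) (y : 'M[B]_(n, k)) :
  mx_star (x *m y) = mx_star y *m mx_star x.
Proof.
apply/matrixP => i j; rewrite !mxE (big_morph star starD star0).
by apply: eq_bigr => l _; rewrite !mxE starM.
Qed.

Lemma mx_star_block m1 m2 n1 n2 (ul : 'M[B]_(m1, n1)) (ur : 'M[B]_(m1, n2))
    (dl : 'M[B]_(m2, n1)) (dr : 'M[B]_(m2, n2)) :
  mx_star (block_mx ul ur dl dr) =
  block_mx (mx_star ul) (mx_star dl) (mx_star ur) (mx_star dr).
Proof. by rewrite /Defs.mx_star map_block_mx tr_block_mx. Qed.

Lemma mx_in_star m n (x : 'M[B]_(m, n)) : mx_in A x -> mx_in A (mx_star x).
Proof. by move=> xA i j; rewrite !mxE; apply: Astar. Qed.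

Lemma mx_in_mul m n k (x : 'M[B]_(m, n)) (y : 'M[B]_(n, k)) :
  mx_in A x -> mx_in A (x *m y).
Proof.
move=> xA i j; rewrite mxE.
by elim/big_ind: _ => [|a b|l _]; [exact: A0 | exact: AD | exact: AMl (xA _ _)].
Qed.

Lemma mx_in_block m1 m2 n1 n2 (ul : 'M[B]_(m1, n1)) (ur : 'M[B]_(m1, n2))
    (dl : 'M[B]_(m2, n1)) (dr : 'M[B]_(m2, n2)) :
  mx_in A ul -> mx_in A ur -> mx_in A dl -> mx_in A dr ->
  mx_in A (block_mx ul ur dl dr).
Proof.
move=> ulA urA dlA drA i j.
by case: (split_ordP i) => i' ->; case: (split_ordP j) => j' ->;
  rewrite ?block_mxEul ?block_mxEur ?block_mxEdl ?block_mxEdr.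
Qed.

Lemma mx_in_c1 x : A x -> mx_in A (c1 x).
Proof. by move=> xA i j; rewrite mxE. Qed.

Lemma mx_in0 m n : mx_in A (0 : 'M[B]_(m, n)).
Proof. by move=> i j; rewrite mxE. Qed.

Lemma mx_mvn_sym n m (p : 'M[B]_n) (q : 'M[B]_m) : mx_mvn p q -> mx_mvn q p.
Proof.
by case=> v [vA vp vq]; exists (mx_star v); rewrite mx_starK; split=> //; apply: mx_in_star.
Qed.

Lemma mx_mvn_trans n m k (p : 'M[B]_n) (q : 'M[B]_m) (r : 'M[B]_k) :
  p *m p = p -> r *m r = r -> mx_mvn p q -> mx_mvn q r -> mx_mvn p r.
Proof.
move=> pp rr [u [uA up uq]] [v [vA vq vr]].
exists (v *m u); rewrite !mx_starM; split; first exact: mx_in_mul.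
- by rewrite !mulmxA -(mulmxA _ _ v) vq -uq !mulmxA -(mulmxA _ _ u) up pp.
- by rewrite !mulmxA -(mulmxA _ u) uq -vq !mulmxA -(mulmxA _ _ (mx_star v)) vr rr.
Qed.

Lemma mx_mvnW (P : B -> Prop) n m (p : 'M[B]_n) (q : 'M[B]_m) :
  (forall x, A x -> P x) -> mx_mvn p q -> Defs.mx_mvn star P p q.
Proof. by move=> AP [v [vA vp vq]]; exists v; split=> // i j; apply: AP. Qed.

Lemma mx_projW (P : B -> Prop) n (p : 'M[B]_n) :
  (forall x, A x -> P x) -> mx_proj p -> Defs.mx_proj star P p.
Proof. by move=> AP [pA pp sp]; split=> // i j; apply: AP. Qed.

Lemma mx_proj_c1 p : is_proj p -> mx_proj (c1 p).
Proof. by case=> pA [pp sp]; split; rewrite ?c1M ?mx_star_c1 ?pp ?sp //; apply: mx_in_c1. Qed.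

Lemma mulmx_dsum n k (x x' : 'M[B]_n) (y y' : 'M[B]_k) :
  dsum x y *m dsum x' y' = dsum (x *m x') (y *m y').
Proof. by rewrite /dsum mulmx_block !mulmx0 !mul0mx !addr0 add0r. Qed.

Lemma mvn_of_mx_mvn1 x y : mx_mvn (c1 x) (c1 y) -> mvn x y.
Proof.
have entry00 (M N : 'M[B]_1) : M = N -> M ord0 ord0 = N ord0 ord0 by move=> ->.
case=> v [vA /entry00 vx /entry00 vy]; exists (v ord0 ord0) => //.
by move: vx vy; rewrite !mxE !big_ord1 !mxE.
Qed.

Lemma dsum_mvn_row a c x y z : A a -> A c -> star a * c = 0 ->
    star a * a = x -> star c * c = y -> a * star a + c * star c = z ->
  mx_mvn (dsum (c1 x) (c1 y)) (dsum (c1 z) (0 : 'M[B]_1)).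
Proof.
move=> aA cA ac0 ax cy acz.
have ca0 : star c * a = 0 by rewrite -[a]starK -starM ac0 star0.
exists (block_mx (c1 a) (c1 c) 0 0); split.
- by apply: mx_in_block; try apply: mx_in_c1; try apply: mx_in0.
- rewrite mx_star_block !mx_star_c1 star0 c10 mulmx_block !mulmx0 ?mul0mx !addr0.
  by rewrite !c1M ac0 ca0 c10 ax cy.
- rewrite mx_star_block !mx_star_c1 star0 c10 mulmx_block !mulmx0 ?mul0mx !addr0.
  by rewrite !c1M c1D acz.
Qed.

Lemma mvn_compl e p1 p2 : is_proj e -> is_proj p1 -> is_proj p2 ->
  proj_le e p2 -> proj_le p1 p2 -> mvn e p1 -> mvn (p2 - e) (p2 - p1).
Proof.
move=> eP p1P p2P ep2 p1p2 [w wA [we wp1]].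
have bP := proj_sub p2P eP ep2; have aP := proj_sub p2P p1P p1p2.
move: (eP) (p1P) (bP) (aP) => [_ [ee se]] [p1A [p1p1 sp1]] [bA [bb sb]] [aA [aa sa]].
have ew : e * star w = star w.
  by rewrite -{1}se -starM (partial_isometry_mulr we ee).
have b_p2 : mx_mvn (dsum (c1 (p2 - e)) (c1 p1)) (dsum (c1 p2) (0 : 'M[B]_1)).
  apply: (dsum_mvn_row bA (Astar wA)).
  - by rewrite sb -ew mulrA (proj_subKl ee ep2) mul0r.
  - by rewrite sb bb.
  - by rewrite starK wp1.
  - by rewrite sb bb starK we subrK.
have a_p2 : mx_mvn (dsum (c1 (p2 - p1)) (c1 p1)) (dsum (c1 p2) (0 : 'M[B]_1)).
  apply: (dsum_mvn_row aA p1A).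
  - by rewrite sa (proj_subKl p1p1 p1p2).
  - by rewrite sa aa.
  - by rewrite sp1 p1p1.
  - by rewrite sa aa sp1 p1p1 subrK.
have ba : mx_mvn (dsum (c1 (p2 - e)) (c1 p1)) (dsum (c1 (p2 - p1)) (c1 p1)).
  by apply: mx_mvn_trans b_p2 (mx_mvn_sym a_p2); rewrite mulmx_dsum !c1M ?bb ?aa p1p1.
apply/mvn_of_mx_mvn1/(hcanc (mx_proj_c1 bP) (mx_proj_c1 aP)).
split=> _; exists 1%N, (c1 p1); split.
- exact: mx_proj_c1.
- exact: ba.
- by apply: mx_projW (mx_proj_c1 p1P).
- by apply: mx_mvnW ba.
Qed.

Lemma mvn_extend e p1 p2 : is_proj e -> is_proj p1 -> is_proj p2 ->
    proj_le e p2 -> proj_le p1 p2 -> mvn e p1 ->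
  exists z, [/\ star z * z = p2, z * star z = p2 & z * e * star z = p1].
Proof.
move=> eP p1P p2P ep2 p1p2 ep1.
have [z0 _ [z0b z0a]] := mvn_compl eP p1P p2P ep2 p1p2 ep1.
case: ep1 => w _ [we wp1].
move: (eP) (p1P) (proj_sub p2P eP ep2) (proj_sub p2P p1P p1p2).
move=> [_ [ee se]] [_ [p1p1 _]] [_ [bb _]] [_ [aa _]].
have [zz zz'] := partial_isometryD we wp1 z0b z0a ee p1p1 bb aa
  (proj_subKr ee ep2) (proj_subKr p1p1 p1p2).
have ze : (w + z0) * e = w.
  rewrite mulrDl (partial_isometry_mulr we ee) -(partial_isometry_mulr z0b bb).
  by rewrite -mulrA (proj_subKl ee ep2) mulr0 addr0.
have esz : e * star (w + z0) = star w by rewrite -{1}se -starM ze.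
exists (w + z0); split; first by rewrite zz subrKC.
- by rewrite zz' subrKC.
- by rewrite -ee !mulrA ze -mulrA esz.
Qed.

Section UnitaryConjugation.
Variables z p2 : B.
Hypotheses (zz : star z * z = p2) (zz' : z * star z = p2).

Lemma conj_proj f : is_proj f -> proj_le f p2 -> is_proj (z * f * star z).
Proof.
move=> [fA [ff sf]] [fp2 _]; split; first by apply: AMl; apply: AMr.
split; last by rewrite !starM starK sf mulrA.
by rewrite !mulrA (mulrA_eq zz) (mulrA_eq fp2) (mulrA_eq ff).
Qed.

Lemma conj_mvn f : is_proj f -> proj_le f p2 -> mvn (z * f * star z) f.
Proof.
move=> [fA [ff sf]] [fp2 _]; exists (f * star z); first exact: AMl.
rewrite starM starK sf !mulrA; split; first by rewrite (mulrA_eq ff).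
by rewrite (mulrA_eq zz) fp2 ff.
Qed.

Lemma conj_le f g : proj_le f g -> proj_le f p2 -> proj_le g p2 ->
  proj_le (z * f * star z) (z * g * star z).
Proof.
move=> [fg gf] [_ p2f] [_ p2g]; split.
- by rewrite !mulrA (mulrA_eq zz) (mulrA_eq p2g) (mulrA_eq fg).
- by rewrite !mulrA (mulrA_eq zz) (mulrA_eq p2f) (mulrA_eq gf).
Qed.

Lemma conj_id : p2 * p2 = p2 -> z * p2 * star z = p2.
Proof. by move=> p2p2; rewrite -{1}zz mulrA zz' -mulrA zz' p2p2. Qed.

End UnitaryConjugation.

Lemma proj_between p1 q p2 :
    is_proj p1 -> is_proj q -> is_proj p2 ->
    proj_le p1 p2 -> proj_lesssim p1 q -> proj_lesssim q p2 ->
  exists q', [/\ is_proj q', mvn q' q, proj_le p1 q' & proj_le q' p2].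
Proof.
move=> p1P qP p2P p1p2 [p1' [p1'P p1'p1 p1'q]] [q0 [q0P q0q q0p2]].
have [e [eP ep1' eq0]] := proj_le_mvn_lesssim p1'P p1'q q0q.
have ep2 := proj_le_trans eq0 q0p2.
have [z [zz zz' zez]] := mvn_extend eP p1P p2P ep2 p1p2 (mvn_trans eP p1P ep1' p1'p1).
have q'P := conj_proj zz q0P q0p2.
exists (z * q0 * star z); split => //.
- exact: mvn_trans q'P qP (conj_mvn zz q0P q0p2) q0q.
- by rewrite -zez; apply: (conj_le zz).
- rewrite -(conj_id zz zz' (proj_le_refl p2P).1).
  exact (conj_le zz q0p2 q0p2 (proj_le_refl p2P)).
Qed.

Section Interpolation.
Variables (N M : nat) (p q : nat -> B) (ms : nat -> nat).
Hypotheses (N_gt0 : (0 < N)%N)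
  (p_proj : forall n, (1 <= n <= N)%N -> is_proj (p n))
  (p_le : forall n, (1 <= n < N)%N -> proj_le (p n) (p n.+1))
  (q_proj : forall m, (1 <= m <= M)%N -> is_proj (q m))
  (q_le : forall m, (1 <= m < M)%N -> proj_le (q m) (q m.+1))
  (ms1_gt0 : (0 < ms 1)%N)
  (ms_lt : forall n, (1 <= n < N)%N -> (ms n < ms n.+1)%N)
  (msN : ms N = M)
  (p_mvn : forall n, (1 <= n <= N)%N -> mvn (p n) (q (ms n))).

Lemma ms_ltn n n' : (1 <= n)%N -> (n < n' <= N)%N -> (ms n < ms n')%N.
Proof.
move=> n_gt0 /andP[nn' n'N].
apply: (@homo_ltn_in _ [pred k | 1 <= k <= N]%N ms (fun a b => a < b)%N) => //;
  rewrite ?inE; try lia.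
- by move=> a b a_in b_in c; rewrite !inE in a_in b_in *; lia.
- by move=> k k_in k1_in; rewrite !inE in k_in k1_in; apply: ms_lt; lia.
Qed.

Lemma ms_range n : (1 <= n <= N)%N -> (1 <= ms n <= M)%N.
Proof.
move=> n_range; rewrite -msN.
have ms1n : (ms 1 <= ms n)%N.
  by have [-> // | n1] := eqVneq n 1%N; apply/ltnW/ms_ltn; lia.
have msnN : (ms n <= ms N)%N.
  by have [-> // | nN] := eqVneq n N; apply/ltnW/ms_ltn; lia.
lia.
Qed.

Definition interpolant k (r : nat -> B) : Prop :=
  [/\ r 0%N = 0,
      forall m, (1 <= m <= k)%N -> is_proj (r m) /\ mvn (r m) (q m),
      forall m, (1 <= m < k)%N -> proj_le (r m) (r m.+1),
      forall n, (1 <= n <= N)%N -> (k <= ms n)%N -> proj_le (r k) (p n) &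
      forall n, (1 <= n <= N)%N -> (ms n <= k)%N -> r (ms n) = p n].

Lemma interpolant0 : interpolant 0 (fun=> 0).
Proof.
split=> //; try lia; first by move=> *; apply: proj_le0.
by move=> n /ms_range; lia.
Qed.

Lemma interpolant_proj k r : interpolant k r -> is_proj (r k).
Proof.
case=> r0 rP _ _ _; have [-> | k_gt0] := eqVneq k 0%N; first by rewrite r0; exact: proj0.
by have [] := rP k; first lia.
Qed.

Lemma interpolant_lesssim k r : (k < M)%N -> interpolant k r -> proj_lesssim (r k) (q k.+1).
Proof.
move=> kM [r0 rP _ _ _]; have [-> | k_gt0] := eqVneq k 0%N.
  rewrite r0; exists 0; split; [exact: proj0 | | exact: proj_le0].
  by exists 0; rewrite ?star0 ?mul0r.
have [rkP rkq] := rP k ltac:(lia).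
by exists (q k); split; [apply: q_proj; lia | apply: mvn_sym | apply: q_le; lia].
Qed.

Lemma next_index k : (k < M)%N ->
  exists n0, [/\ (1 <= n0 <= N)%N, (k < ms n0)%N &
    forall n, (1 <= n <= N)%N -> (k < ms n)%N -> (n0 <= n)%N].
Proof.
move=> kM; have ex : exists n, [&& 1 <= n, n <= N & k < ms n]%N.
  by exists N; rewrite N_gt0 leqnn msN.
case: (ex_minnP ex) => n0 /and3P[n0_gt0 n0N kn0] n0_min.
exists n0; split; rewrite ?n0_gt0 ?n0N //.
by move=> n /andP[n_gt0 nN] kn; apply: n0_min; rewrite n_gt0 nN.
Qed.

Lemma interpolant_next k r n0 : (k < M)%N -> interpolant k r ->
    (1 <= n0 <= N)%N -> (k < ms n0)%N ->
  exists x, [/\ is_proj x, mvn x (q k.+1), proj_le (r k) x, proj_le x (p n0) &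
    ms n0 = k.+1 -> x = p n0].
Proof.
move=> kM rI n0_range kn0; have rkP := interpolant_proj rI.
have rkp : proj_le (r k) (p n0) by case: rI => _ _ _ r_p _; apply: r_p; lia.
have [ms_n0 | ms_n0] := eqVneq (ms n0) k.+1.
  exists (p n0); split=> //; last exact/proj_le_refl/p_proj.
  - exact: p_proj.
  - by rewrite -ms_n0; apply: p_mvn.
have qkP : is_proj (q k.+1) by apply: q_proj; lia.
have qp : proj_lesssim (q k.+1) (p n0).
  apply: proj_le_mvn_lesssim qkP _ (p_mvn n0_range).
  by apply: (proj_le_chain q_proj q_le); have := ms_range n0_range; lia.
have [x [? ? ? ?]] := proj_between rkP qkP (p_proj n0_range) rkp
  (interpolant_lesssim kM rI) qp.
by exists x; split=> // ms_n0'; rewrite ms_n0' eqxx in ms_n0.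
Qed.

Lemma interpolant_step k r : (k < M)%N -> interpolant k r ->
  exists r', interpolant k.+1 r'.
Proof.
move=> kM rI; have [n0 [n0_range kn0 n0_min]] := next_index kM.
have [x [xP xq rx xp x_ms]] := interpolant_next kM rI n0_range kn0.
case: rI => r0 rP r_le r_p r_ms.
exists (fun m => if m == k.+1 then x else r m); split=> //.
- by move=> m m_range; case: eqP => [-> // | mk]; apply: rP; lia.
- move=> m m_range; rewrite ifN; last lia.
  by case: eqP => [[->] // | mk]; apply: r_le; lia.
- move=> n n_range kn; rewrite eqxx; have p_chain := proj_le_chain p_proj p_le.
  by apply: proj_le_trans xp (p_chain _ _ _ _); have := n0_min n n_range kn; lia.
- move=> n n_range; case: eqP => [msn _ | msn msn_le]; last by apply: r_ms; lia.
  have n0n : (n0 <= n)%N by apply: n0_min; lia.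
  have [n0_eq | n0n'] := eqVneq n0 n; first by rewrite -n0_eq in msn *; apply: x_ms.
  have : (ms n0 < ms n)%N by apply: ms_ltn; lia.
  lia.
Qed.

Lemma interpolation : exists r : nat -> B,
  [/\ (forall m, (1 <= m <= M)%N -> is_proj (r m)),
      (forall m, (1 <= m < M)%N -> proj_le (r m) (r m.+1)),
      (forall m, (1 <= m <= M)%N -> mvn (r m) (q m)) &
      (forall n, (1 <= n <= N)%N -> r (ms n) = p n)].
Proof.
have ex_r k : (k <= M)%N -> exists r, interpolant k r.
  elim: k => [_ | k IH kM]; first by exists (fun=> 0); apply: interpolant0.
  by have [r rI] := IH (ltnW kM); apply: interpolant_step rI.
have [r [_ rP r_le _ r_ms]] := ex_r M (leqnn M).
exists r; split=> // [m /rP [] // | m /rP [] // | n n_range].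
by apply: r_ms => //; have := ms_range n_range; lia.
Qed.

End Interpolation.

End ProperStarIdeal.

Lemma Cstar_star_mul_eq0 (R : realType) (B : algType R[i]) (star : B -> B) (nrm : B -> R) :
  is_unital_Cstar_algebra star nrm -> forall x, star x * x = 0 -> x = 0.
Proof.
case=> _ [_ [_ [_ [nrm_eq0 [_ [_ [_ [nrm_star_mul _]]]]]]]] x xx0.
apply/nrm_eq0; have := nrm_star_mul x.
rewrite xx0 (proj2 (nrm_eq0 0) erefl) => /esym/eqP.
by rewrite sqrf_eq0 => /eqP.
Qed.

Theorem lemma2p2 (R : realType) (B : algType R[i]) (star : B -> B)
    (nrm : B -> R) (A : B -> Prop)
    (hB : is_unitization_of star nrm A) (hcanc : has_cancellation star A) :
  (* (1) *)
  (forall p1 q p2 : B,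
      is_proj star A p1 -> is_proj star A q -> is_proj star A p2 ->
      proj_le p1 p2 -> proj_lesssim star A p1 q -> proj_lesssim star A q p2 ->
      exists q' : B,
        [/\ is_proj star A q', mvn star A q' q, proj_le p1 q' & proj_le q' p2])
  /\
  (* (2) *)
  (forall (N M : nat) (p q : nat -> B) (ms : nat -> nat),
      (1 <= N)%N ->
      (forall n, (1 <= n <= N)%N -> is_proj star A (p n)) ->
      (forall n, (1 <= n < N)%N -> proj_le (p n) (p n.+1)) ->
      (forall m, (1 <= m <= M)%N -> is_proj star A (q m)) ->
      (forall m, (1 <= m < M)%N -> proj_le (q m) (q m.+1)) ->
      (1 <= ms 1%N)%N ->
      (forall n, (1 <= n < N)%N -> (ms n < ms n.+1)%N) ->
      ms N = M ->
      (forall n, (1 <= n <= N)%N -> mvn star A (p n) (q (ms n))) ->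
      exists r : nat -> B,
        [/\ (forall m, (1 <= m <= M)%N -> is_proj star A (r m)),
            (forall m, (1 <= m < M)%N -> proj_le (r m) (r m.+1)),
            (forall m, (1 <= m <= M)%N -> mvn star A (r m) (q m)) &
            (forall n, (1 <= n <= N)%N -> r (ms n) = p n)]).
Proof.
have [hC [A0 [AD [_ [AM [Astar _]]]]]] := hB.
have [starD [_ [starM [starK _]]]] := hC.
have star_mul_eq0 := Cstar_star_mul_eq0 hC.
have AMl x y : A x -> A (x * y) by case/(AM x y).
have AMr x y : A y -> A (x * y) by case/(AM y x).
split=> [p1 q p2 | N M p q ms *]; first exact: proj_between.
exact: interpolation.
Qed.
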